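(* Let $G=(V,E)$ be a connected graph with $n$ vertices, $\tau$ a set of types with $|\tau|=k>1$, $f:\tau\to\mathbb{Q}_{\ge1}$ a fitness function, and $\alpha\in\tau^+(f)$. Let $f^*=\max\{f(j): j\in\tau\setminus\{\alpha\}\}$ and suppose $f^*<f(\alpha)=f^+$. Let $M$ be a Moran process $M(G,\tau,f,M_0)$ and suppose that $V_\alpha(t)\notin\{\emptyset,V\}$ for a non-negative integer $t$. Then (conditional on $M_t$) $\mathbb{E}(\Psi_\alpha(M_{t+1})-\Psi_\alpha(M_t))>(1-f^*/f^+)/n^3$.
   Context: $f^+=\max_{i\in\tau}f(i)$, $\tau^+(f)=\{i:f(i)=f^+\}$. For $G=(V,E)$, $N(v)$ is the neighbourhood and $d(v)=|N(v)|$. For a state $S:V\to\tau$, $S|_{v\to w}$ equals $S$ except $w$ gets type $S(v)$. The Moran process $M(G,\tau,f,M_0)$: Markov chain on states from $M_0$; given $M_t$, choose $v$ with probability $f(M_t(v))/\sum_uf(M_t(u))$, then $w\in N(v)$ uniformly, and set $M_{t+1}=M_t|_{v\to w}$. $V_j(t)=\{v: M_t(v)=j\}$. The potential $\Psi_j(S)=\sum_{v:S(v)=j}1/d(v)$. *)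

From mathcomp Require Import all_boot all_order all_algebra.
Set Implicit Arguments. Unset Strict Implicit. Unset Printing Implicit Defensive.
Import Order.TTheory GRing.Theory Num.Theory.
Local Open Scope ring_scope.

Section Moran.
Variables (V tau : finType) (e : rel V).

Definition nbhd (v : V) : {set V} := [set w | e v w].
Definition deg (v : V) : nat := #|nbhd v|.

Definition simple_graph := symmetric e /\ irreflexive e.
Definition connected_graph := forall x y : V, connect e x y.

(* f^+ and f^* (maximum of f over tau \ {alpha}); fitness values are >= 1 so 0 is a safe seed *)
Definition fplus (f : tau -> rat) : rat := \big[Num.max/0]_(i : tau) f i.
Definition fstar (f : tau -> rat) (a : tau) : rat := \big[Num.max/0]_(j : tau | j != a) f j.
Definition tauplus (f : tau -> rat) : {set tau} := [set i | f i == fplus f].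

Definition upd (S : {ffun V -> tau}) (v w : V) : {ffun V -> tau} :=
  [ffun u => if u == w then S v else S u].

Definition Psi (j : tau) (S : {ffun V -> tau}) : rat :=
  \sum_(v : V | S v == j) ((deg v)%:R)^-1.

Definition Vset (j : tau) (S : {ffun V -> tau}) : {set V} := [set v | S v == j].

Definition total_fitness (f : tau -> rat) (S : {ffun V -> tau}) : rat := \sum_(u : V) f (S u).

(* Expected one-step change of Psi_j of the Moran process given M_t = S:
   v chosen with probability f(S v)/sum_u f(S u), then w uniformly in N(v). *)
Definition expected_Psi_change (f : tau -> rat) (j : tau) (S : {ffun V -> tau}) : rat :=
  \sum_(v : V) \sum_(w in nbhd v)
     (f (S v) / total_fitness f S) * ((deg v)%:R)^-1 * (Psi j (upd S v w) - Psi j S).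

End Moran.

From mathcomp Require Import all_boot all_order all_algebra.
From mathcomp Require Import ring.
Set Implicit Arguments.
Unset Strict Implicit.
Unset Printing Implicit Defensive.
Import Order.TTheory GRing.Theory Num.Theory.
Local Open Scope ring_scope.

(* Writing [Psi_alpha(S|_{v->w}) - Psi_alpha(S) = ([S v = alpha] - [S w = alpha]) / d(w)] and
   pairing each edge (v, w) with its reverse, the expected change becomes a sum over ordered
   edges from an alpha-vertex v to a non-alpha vertex w of
   [(f(alpha) - f(S w)) / (F d(v) d(w))], where F is the total fitness.  Every term is
   nonnegative, and connectivity provides at least one such edge; for it
   [f(alpha) - f(S w) >= f^+ - f^*], [F <= n f^+] and [d(v) d(w) < n^2]. *)

Section Moran.
Variables (V tau : finType) (e : rel V).

Lemma connect_boundary_edge (P : pred V) (x y : V) :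
  connect e x y -> P x -> ~~ P y -> exists v w, [&& e v w, P v & ~~ P w].
Proof.
case/connectP=> p + ->; elim: p x => [|z p IHp] x /=; first by move=> _ ->.
case/andP=> exz pz Px; case Pz: (P z); first exact: IHp.
by exists x, z; rewrite exz Px Pz.
Qed.

Lemma deg_gt0 (v w : V) : e v w -> (0 < deg e v)%N.
Proof. by move=> evw; apply/card_gt0P; exists w; rewrite inE. Qed.

Lemma deg_lt_card (v : V) : irreflexive e -> (deg e v < #|V|)%N.
Proof.
move=> e_irr; rewrite -cardsT; apply/proper_card/properP.
by split; [apply/subsetP=> w; rewrite inE | exists v; rewrite ?inE ?e_irr].
Qed.

Lemma sum_nbhd_swap (R : nmodType) (F : V -> V -> R) : symmetric e ->
  \sum_v \sum_(w in nbhd e v) F v w = \sum_v \sum_(w in nbhd e v) F w v.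
Proof.
move=> e_sym; under eq_bigr do rewrite big_mkcond /=.
rewrite exchange_big; apply: eq_bigr => v _.
by rewrite [RHS]big_mkcond; apply: eq_bigr => w _; rewrite !inE e_sym.
Qed.

Lemma le_sum_nbhd (R : numDomainType) (F : V -> V -> R) (v w : V) :
  (forall v w, 0 <= F v w) -> e v w -> F v w <= \sum_v \sum_(w in nbhd e v) F v w.
Proof.
move=> F_ge0 evw; rewrite (bigD1 v) //= (bigD1 w) ?inE //= -addrA lerDl.
by rewrite addr_ge0 ?sumr_ge0 // => u _; rewrite sumr_ge0.
Qed.

Lemma total_fitness_gt0 (f : tau -> rat) (S : {ffun V -> tau}) (x : V) :
  (forall i, 0 < f i) -> 0 < total_fitness f S.
Proof.
move=> f_gt0; rewrite /total_fitness (bigD1 x) //=.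
by rewrite ltr_pwDl ?f_gt0 // sumr_ge0 // => u _; rewrite ltW.
Qed.

Lemma total_fitness_le (f : tau -> rat) (S : {ffun V -> tau}) (c : rat) :
  (forall i, f i <= c) -> total_fitness f S <= #|V|%:R * c.
Proof.
move=> f_le; apply: le_trans (ler_sum _ (fun u _ => f_le (S u))) _.
by rewrite sumr_const mulr_natl.
Qed.

Lemma Psi_upd_sub (a : tau) (S : {ffun V -> tau}) (v w : V) :
  Psi e a (upd S v w) - Psi e a S = ((S v == a)%:R - (S w == a)%:R) / (deg e w)%:R.
Proof.
rewrite /Psi !(big_mkcond (fun u => _ == a)) /=.
rewrite (bigD1 w) // [X in _ - X](bigD1 w) //= ffunE eqxx.
rewrite (eq_bigr (fun u => if S u == a then (deg e u)%:R^-1 else 0)); last first.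
  by move=> u /negbTE uw; rewrite ffunE uw.
rewrite opprD addrACA subrr addr0 mulrBl.
by case: (S v == a); case: (S w == a); rewrite ?mul0r ?mul1r ?subr0 ?sub0r.
Qed.

Lemma expected_Psi_change_boundary (f : tau -> rat) (a : tau) (S : {ffun V -> tau}) :
  symmetric e ->
  expected_Psi_change e f a S =
  \sum_v \sum_(w in nbhd e v) (f (S v) - f (S w)) *
    (((S v == a) && (S w != a))%:R / (total_fitness f S * (deg e v)%:R * (deg e w)%:R)).
Proof.
move=> e_sym; set F := total_fitness f S.
pose g v w := ((S v == a) && (S w != a))%:R / (F * (deg e v)%:R * (deg e w)%:R).
have flux v w : f (S v) / F * (deg e v)%:R^-1 * (Psi e a (upd S v w) - Psi e a S)
              = f (S v) * g v w - f (S v) * g w v.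
  rewrite Psi_upd_sub /g !invfM.
  by case: (S v == a); case: (S w == a) => /=; ring.
rewrite /expected_Psi_change.
under eq_bigr do under eq_bigr do rewrite flux.
under eq_bigr do rewrite sumrB.
rewrite sumrB -(sum_nbhd_swap (fun v w => f (S w) * g v w)) // -sumrB.
by apply: eq_bigr => v _; rewrite -sumrB; apply: eq_bigr => w _; rewrite mulrBl.
Qed.

Lemma boundary_term_lower_bound (R : realFieldType) (a s b F x N : R) :
  0 < a -> s < a -> b <= s -> 0 < F -> F <= N * a -> 0 < x -> x < N ^+ 2 ->
  (1 - s / a) / N ^+ 3 < (a - b) / (F * x).
Proof.
move=> a_gt0 s_lt_a b_le_s F_gt0 F_le x_gt0 x_lt.
have N_gt0 : 0 < N by rewrite -(pmulr_lgt0 _ a_gt0); exact: lt_le_trans F_le.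
have Fx_lt : F * x < a * N ^+ 3.
  rewrite (exprS N 2) mulrA [a * N]mulrC.
  apply: le_lt_trans (_ : N * a * x < _); first by rewrite ler_wpM2r // ltW.
  by rewrite ltr_pM2l ?mulr_gt0.
have -> : (1 - s / a) / N ^+ 3 = (a - s) / (a * N ^+ 3).
  by field; rewrite ?expf_neq0 ?gt_eqF.
apply: lt_le_trans (_ : (a - s) / (F * x) <= _).
  by rewrite ltr_pM2l ?subr_gt0 // ltf_pV2 ?posrE ?mulr_gt0 ?exprn_gt0.
apply: ler_wpM2r; first by rewrite invr_ge0 ltW // mulr_gt0.
by rewrite lerD2l lerN2.
Qed.

End Moran.

Theorem lemma12 (V tau : finType) (e : rel V) (f : tau -> rat) (alpha : tau)
    (S : {ffun V -> tau}) :
  simple_graph e -> connected_graph e ->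
  (1 < #|tau|)%N ->
  (forall i : tau, 1 <= f i) ->
  alpha \in tauplus f ->
  fstar f alpha < f alpha ->
  Vset alpha S != set0 -> Vset alpha S != [set: V] ->
  expected_Psi_change e f alpha S > (1 - fstar f alpha / fplus f) / (#|V|%:R ^+ 3).
Proof.
move=> [e_sym e_irr] e_conn _ f_ge1 alpha_max fstar_lt Sne SnT.
have fplusE : fplus f = f alpha by apply/esym/eqP; rewrite inE in alpha_max.
have f_le_alpha i : f i <= f alpha by rewrite -fplusE le_bigmax.
have f_gt0 i : 0 < f i by apply: lt_le_trans (f_ge1 i).
have [v [w /and3P [evw /eqP Sv Sw]]] :
    exists v w, [&& e v w, S v == alpha & S w != alpha].
  case/set0Pn: Sne => x; rewrite inE => Sx.
  rewrite eqEsubset subsetT in SnT; case/subsetPn: SnT => y _; rewrite inE => Sy.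
  exact: (connect_boundary_edge (P := fun u => S u == alpha) (e_conn x y)).
rewrite expected_Psi_change_boundary // fplusE.
apply: lt_le_trans (le_sum_nbhd _ evw); last first.
  move=> v' w'; case: (S v' =P alpha) => [Sv'|]; last by rewrite mul0r mulr0.
  rewrite Sv' mulr_ge0 ?subr_ge0 ?divr_ge0 ?ler0n ?mulr_ge0 ?ler0n //.
  exact/ltW/(total_fitness_gt0 S v f_gt0).
rewrite Sv eqxx Sw mul1r -mulrA.
apply: boundary_term_lower_bound => //.
- by apply: le_bigmax_cond.
- exact: total_fitness_gt0 S v f_gt0.
- exact: total_fitness_le S _ f_le_alpha.
- have ewv : e w v by rewrite e_sym.
  by rewrite mulr_gt0 // ltr0n; [apply: deg_gt0 evw | apply: deg_gt0 ewv].
- by rewrite -natrM -natrX ltr_nat ltn_mul ?deg_lt_card.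
Qed.
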